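(* Let $2\le n_1\le n_2\le n_3$. Then $2K_1\uplus Q(n_1,n_2,n_3)$ has a $4$-placement in which both isolated vertices and all nodes of $Q(n_1,n_2,n_3)$ are $4$-placed.
   Context: $\uplus$ denotes vertex-disjoint union and $2K_1$ is two isolated vertices. $Q(n_1,\dots,n_t)$ ($1\le n_1\le\cdots\le n_t$) is the tree obtained from the star with centre $v$ and $t$ leaves by replacing each leaf with a path $v^i_1v^i_2\cdots v^i_{n_i}$, where $v$ is adjacent to $v^i_1$. A leaf is a vertex of degree 1; a node is a vertex of degree at least 2 adjacent to a leaf. For a graph $H$ on $m$ vertices, a $k$-placement of $H$ is a $k$-tuple $(\phi_1,\dots,\phi_k)$ of bijections $\phi_i:V(H)\to V(K_m)$ with pairwise disjoint edge sets $\phi_i(E(H))$; a vertex $v$ is $k$-placed if $\phi_i(v)\ne\phi_j(v)$ for all $i\neq j$. *)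

From mathcomp Require Import all_boot all_fingroup.
Set Implicit Arguments. Unset Strict Implicit. Unset Printing Implicit Defensive.

(* Labelling of 2K_1 ⊎ Q(n_1,...,n_t), ns = [:: n_1; ...; n_t]  (all n_i >= 1):
   vertex 0            = centre v
   arm i (0-based)     = vertices arm_start ns i .. arm_end ns i, in path order
                         (v^i_1 = arm_start ns i, v^i_{n_i} = arm_end ns i)
   vertices sumn ns + 1, sumn ns + 2 = the two isolated vertices. *)
Definition arm_start (ns : seq nat) (i : nat) : nat := (sumn (take i ns)).+1.
Definition arm_end (ns : seq nat) (i : nat) : nat := sumn (take i.+1 ns).

Definition qadj (ns : seq nat) (x y : nat) : bool :=
  ((x == 0) && has (fun i => y == arm_start ns i) (iota 0 (size ns)))
  || [&& y == x.+1, 0 < x, y <= sumn ns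
       & ~~ has (fun i => x == arm_end ns i) (iota 0 (size ns))].

Definition Vx (ns : seq nat) := 'I_(sumn ns + 3).

Definition hedge (ns : seq nat) : rel (Vx ns) :=
  fun x y => qadj ns x y || qadj ns y x.

Arguments hedge : clear implicits.

Definition deg (T : finType) (e : rel T) (x : T) : nat := #|[set y | e x y]|.
Definition is_leaf (T : finType) (e : rel T) (x : T) : bool := deg e x == 1.
Definition is_node (T : finType) (e : rel T) (x : T) : bool :=
  (2 <= deg e x) && [exists y, e x y && is_leaf e y].

(* a k-placement of the graph (T, e) into K_{|T|} (vertex set identified with T):
   k bijections whose edge images are pairwise disjoint (e symmetric). *)
Definition is_placement (T : finType) (k : nat) (e : rel T)
    (phi : 'I_k -> {perm T}) : Prop :=
  forall i j : 'I_k, i != j ->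
  forall x y x' y' : T, e x y -> e x' y' ->
    ~ (phi i x = phi j x' /\ phi i y = phi j y').

Definition k_placed (T : finType) (k : nat) (phi : 'I_k -> {perm T}) (x : T) : Prop :=
  forall i j : 'I_k, i != j -> phi i x != phi j x.

(* A cyclic placement makes every vertex 4-placed: label the m = n1 + n2 + n3 + 3
   vertices bijectively by Z_m via s and let phi_i x = s x + i for i < 4.  The phi_i
   have pairwise disjoint edge images as soon as no labelled edge {s x, s y}, translated
   by t in {1, 2, 3}, is again a labelled edge.
   The path formed by arms 1 and 3 through the centre is labelled by a zigzag of
   [0, L], L = n1 + n3, alternating between the two ends of the interval, so that its
   edges have label sums L or L +- 1; arm 2 zigzags through [L + 1, n1 + n2 + n3] in the
   same way, and the isolated vertices keep the two top labels.  A translation by t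
   adds 2t to a label sum (up to wrapping around Z_m), which is incompatible with these
   tight sums and label ranges, except when n1 = n2 = n3 = 2; that case gets an ad hoc
   labelling of Z_9. *)

From mathcomp Require Import all_boot all_fingroup zify.

Section CyclicPlacement.

Variables (m k : nat) (e : rel 'I_m) (s : nat -> nat) (P : nat -> nat -> Prop).
Hypotheses (m_gt0 : 0 < m) (k_le_m : k <= m).
Hypothesis s_lt : forall x, x < m -> s x < m.
Hypothesis s_inj : forall x y, x < m -> y < m -> s x = s y -> x = y.
Hypothesis e_P : forall x y, e x y -> P (s x) (s y).
Hypothesis P_shift : forall a b t, a < m -> b < m -> 0 < t < k ->
  P a b -> ~ P ((a + t) %% m) ((b + t) %% m).

Definition shift_label (i : 'I_k) (x : 'I_m) : 'I_m :=
  Ordinal (ltn_pmod (s x + i) m_gt0).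

Lemma shift_label_inj i : injective (shift_label i).
Proof.
move=> x y /(congr1 val) /= /eqP; rewrite eqn_modDr !modn_small ?s_lt //.
by move=> /eqP /(s_inj _ _ (ltn_ord x) (ltn_ord y)) /val_inj.
Qed.

Lemma shift_label_eq (i j : 'I_k) (z z' : 'I_m) : j < i ->
  shift_label i z = shift_label j z' -> s z' = (s z + (i - j)) %% m.
Proof.
move=> lt_ji /(congr1 val) /= eq_zz'.
have /eqP : s z' == s z + (i - j) %[mod m].
  by rewrite -(eqn_modDr j) -addnA subnK ?(ltnW lt_ji) // eq_zz'.
by rewrite modn_small ?s_lt.
Qed.

Lemma cyclic_placement :
  exists phi : 'I_k -> {perm 'I_m}, is_placement e phi /\ forall x, k_placed phi x.
Proof.
exists (fun i => perm (shift_label_inj i)); split.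
- move=> i j; wlog lt_ji : i j / j < i.
    move=> wlog_ij ij x y x' y' exy exy'; case: (ltngtP j i) => [lt_ji|lt_ij|eq_ji].
    + exact: wlog_ij.
    + by move=> [/esym ? /esym ?]; apply: (wlog_ij j i) exy' exy _ => //; rewrite eq_sym.
    + by move: ij; rewrite (val_inj eq_ji) eqxx.
  move=> _ x y x' y' exy exy'; rewrite !permE => -[/shift_label_eq hx /shift_label_eq hy].
  have t_bound : 0 < i - j < k by rewrite subn_gt0 lt_ji /=; have := ltn_ord i; lia.
  apply: (P_shift _ _ _ (s_lt _ (ltn_ord x)) (s_lt _ (ltn_ord y)) t_bound (e_P _ _ exy)).
  by rewrite -hx // -hy //; exact: e_P exy'.
- move=> x i j ij; rewrite !permE; apply/negP => /eqP /(congr1 val) /= /eqP.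
  rewrite eqn_modDl !modn_small; try (have := ltn_ord i; have := ltn_ord j; lia).
  by move=> /eqP /val_inj /eqP; rewrite (negbTE ij).
Qed.

End CyclicPlacement.

Lemma modnD_lt a t m : a < m -> t < m ->
  (a + t) %% m = if a + t < m then a + t else a + t - m.
Proof.
move=> a_lt t_lt; case: ltnP => sum_lt; first by rewrite modn_small.
by rewrite -[a + t](subnK sum_lt) modnDr modn_small //; lia.
Qed.

Definition zigzag (lo hi b k : nat) : nat :=
  if k %% 2 == b then lo + k %/ 2 else hi - k %/ 2.

Definition zigzag_edge (lo hi b a c : nat) : Prop :=
  a <> c /\ lo <= a <= hi /\ lo <= c <= hi /\
  (a + c = lo + hi \/ (b = 0 /\ a + c = (lo + hi).+1) \/ (b = 1 /\ (a + c).+1 = lo + hi)).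

Lemma zigzag_edge_sym lo hi b a c : zigzag_edge lo hi b a c -> zigzag_edge lo hi b c a.
Proof. by rewrite /zigzag_edge; lia. Qed.

Lemma zigzag_step lo hi b k : b < 2 -> lo + k < hi ->
  zigzag_edge lo hi b (zigzag lo hi b k) (zigzag lo hi b k.+1).
Proof. by move=> *; rewrite /zigzag_edge /zigzag; case: ifP => ?; case: ifP => ?; lia. Qed.

Lemma zigzag_edge_adj lo hi b p q : b < 2 -> q = p.+1 \/ p = q.+1 ->
  lo + maxn p q <= hi -> zigzag_edge lo hi b (zigzag lo hi b p) (zigzag lo hi b q).
Proof.
move=> b_lt2 [->|->] bound; last apply: zigzag_edge_sym; apply: zigzag_step => //; lia.
Qed.

Lemma qadj3_cases n1 n2 n3 x y : qadj [:: n1; n2; n3] x y ->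
  (x = 0 /\ (y = 1 \/ y = n1.+1 \/ y = (n1 + n2).+1)) \/
  [/\ y = x.+1, 0 < x, y <= n1 + n2 + n3, x <> n1 & x <> n1 + n2].
Proof.
rewrite /qadj /arm_start /arm_end /= !addn0 !orbF.
case/orP => [/andP [/eqP -> arm_start_y] | /and4P [/eqP -> x_gt0 y_le not_arm_end]].
- by left; split => //; move: arm_start_y => /or3P [] /eqP ->; lia.
- by right; move: not_arm_end; rewrite !negb_or => /and3P [/eqP ? /eqP ? _]; split; lia.
Qed.

Section Q3Label.

Variables n1 n2 n3 : nat.

Local Notation L := (n1 + n3).
Local Notation N := (n1 + n2 + n3).
Local Notation m := (N + 3).

(* Vertex x <= n1 (the centre for x = 0, arm 1 otherwise) sits at position n1 - x
   of the path v^1_{n1} ... v^1_1 v v^3_1 ... v^3_{n3}, and vertex x of arm 3 at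
   position x - n2. *)
Definition q3_label (x : nat) : nat :=
  if x <= n1 then zigzag 0 L (n1 %% 2) (n1 - x)
  else if x <= n1 + n2 then zigzag L.+1 N 1 (x - n1.+1)
  else if x <= N then zigzag 0 L (n1 %% 2) (x - n2)
  else x.

Definition q3_label_edge (a c : nat) : Prop :=
  zigzag_edge 0 L (n1 %% 2) a c \/ zigzag_edge L.+1 N 1 a c
  \/ (a = n1 %/ 2 /\ c = N) \/ (a = N /\ c = n1 %/ 2).

Lemma q3_label_lt x : x < m -> q3_label x < m.
Proof. by move=> ?; rewrite /q3_label /zigzag; repeat case: ifP => ?; lia. Qed.

Lemma q3_label_inj x y : x < m -> y < m -> q3_label x = q3_label y -> x = y.
Proof. by move=> ? ?; rewrite /q3_label /zigzag; repeat case: ifP => ?; lia. Qed.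

Lemma q3_label_edge_sym a c : q3_label_edge a c -> q3_label_edge c a.
Proof. by rewrite /q3_label_edge /zigzag_edge; lia. Qed.

Lemma q3_label_path x : x <= n1 -> q3_label x = zigzag 0 L (n1 %% 2) (n1 - x).
Proof. by rewrite /q3_label => ->. Qed.

Lemma q3_label_arm2 x : n1 < x <= n1 + n2 -> q3_label x = zigzag L.+1 N 1 (x - n1.+1).
Proof. by move=> ?; rewrite /q3_label; repeat case: ifP => ?; lia. Qed.

Lemma q3_label_arm3 x : n1 + n2 < x <= N -> q3_label x = zigzag 0 L (n1 %% 2) (x - n2).
Proof. by move=> ?; rewrite /q3_label; repeat case: ifP => ?; lia. Qed.

Hypotheses (n1_ge2 : 2 <= n1) (n1_le_n2 : n1 <= n2) (n2_le_n3 : n2 <= n3).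

Lemma qadj3_label_edge x y : qadj [:: n1; n2; n3] x y ->
  q3_label_edge (q3_label x) (q3_label y).
Proof.
have b_lt2 : n1 %% 2 < 2 by rewrite ltn_mod.
case/qadj3_cases => [[-> [->|[->|->]]] | [-> x_gt0 y_le x_neq1 x_neq2]];
  rewrite /q3_label_edge.
- rewrite !q3_label_path; [left; apply: zigzag_edge_adj | ..]; lia.
- rewrite q3_label_path ?q3_label_arm2; [|lia..].
  by do 2 right; left; rewrite /zigzag; do 2 case: ifP => ?; lia.
- rewrite q3_label_path ?q3_label_arm3; [left; apply: zigzag_edge_adj | ..]; lia.
- have [x_lt|x_gt] := ltnP x n1.
    rewrite !q3_label_path; [left; apply: zigzag_edge_adj | ..]; lia.
  have [x_lt'|x_gt'] := ltnP x (n1 + n2).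
    rewrite !q3_label_arm2; [right; left; apply: zigzag_edge_adj | ..]; lia.
  rewrite !q3_label_arm3; [left; apply: zigzag_edge_adj | ..]; lia.
Qed.

Hypothesis not_all2 : ~~ [&& n1 == 2, n2 == 2 & n3 == 2].

Lemma q3_label_edge_shift a c t : a < m -> c < m -> 0 < t < 4 ->
  q3_label_edge a c -> ~ q3_label_edge ((a + t) %% m) ((c + t) %% m).
Proof.
move=> a_lt c_lt t_bound; rewrite !modnD_lt; try lia.
by rewrite /q3_label_edge /zigzag_edge; case: ifP => ?; case: ifP => ?; lia.
Qed.

Lemma q3_cyclic_placement :
  exists phi : 'I_4 -> {perm Vx [:: n1; n2; n3]},
    is_placement (hedge [:: n1; n2; n3]) phi /\ forall x, k_placed phi x.
Proof.
have sum3 : sumn [:: n1; n2; n3] + 3 = m by rewrite /= addn0 addnA.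
apply: (@cyclic_placement _ 4 (hedge [:: n1; n2; n3]) q3_label q3_label_edge);
  rewrite ?sum3.
- lia.
- lia.
- exact: q3_label_lt.
- exact: q3_label_inj.
- by move=> x y /orP [] /qadj3_label_edge // /q3_label_edge_sym.
- exact: q3_label_edge_shift.
Qed.

End Q3Label.

Definition q222_label (x : nat) : nat := nth x [:: 0; 1; 3; 4; 5; 6; 8; 2; 7] x.

Definition q222_label_edges : seq (nat * nat) :=
  [:: (0, 1); (1, 3); (0, 4); (4, 5); (0, 6); (6, 8)].

Definition q222_label_edge (a c : nat) : bool :=
  ((a, c) \in q222_label_edges) || ((c, a) \in q222_label_edges).

Lemma q222_cyclic_placement :
  exists phi : 'I_4 -> {perm Vx [:: 2; 2; 2]},
    is_placement (hedge [:: 2; 2; 2]) phi /\ forall x, k_placed phi x.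
Proof.
apply: (@cyclic_placement _ 4 (hedge [:: 2; 2; 2]) q222_label q222_label_edge) => //.
- by do 10?case.
- by do 10?case => //; do 10?case.
- move=> [x lt_x] [y lt_y]; rewrite /hedge /=.
  by move: lt_x lt_y; move: x y; do 10?case => //; do 10?case.
- by do 10?case => //; do 10?case => //; do 4?case.
Qed.

Theorem lemma2p7 (n1 n2 n3 : nat) :
  2 <= n1 -> n1 <= n2 -> n2 <= n3 ->
  exists phi : 'I_4 -> {perm Vx [:: n1; n2; n3]},
    is_placement (hedge [:: n1; n2; n3]) phi /\
    (forall x : Vx [:: n1; n2; n3],
       sumn [:: n1; n2; n3] < x -> k_placed phi x) /\
    (forall x : Vx [:: n1; n2; n3],
       is_node (hedge [:: n1; n2; n3]) x -> k_placed phi x).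
Proof.
move=> n1_ge2 n1_le_n2 n2_le_n3.
have [phi [phi_placement phi_placed]] : exists phi : 'I_4 -> {perm Vx [:: n1; n2; n3]},
    is_placement (hedge [:: n1; n2; n3]) phi /\ forall x, k_placed phi x.
  have [/and3P [/eqP -> /eqP -> /eqP ->] | not_all2] :=
    boolP [&& n1 == 2, n2 == 2 & n3 == 2].
    exact: q222_cyclic_placement.
  exact: q3_cyclic_placement.
by exists phi; split => //; split => x _; exact: phi_placed.
Qed.
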